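(* Let $A(x)=\sin^2(2\pi x)$, $\hat m(A)=\frac{A(1/3)+A(2/3)}{2}$, $\eta(x)=\frac{x}{4}+\frac12$, $F(x)=A(\frac{x}{2})+A(\frac{x}{4}+\frac12)$, and $V_2(x)=\lim_{n\to\infty}\sum_{i=0}^{n-1}[F(\eta^i(x))-2\hat m(A)]$ for $x\in[0,1]$. Then for each $N$, $V_2(x)=\sum_{i=0}^{N}\bigl(F(\eta^i(x))-2\hat m(A)\bigr)+\epsilon_N(x)$ where $$|\epsilon_N(x)|\le 2\pi\sum_{i=N}^{\infty}\frac{1}{4^i}=\frac{2\pi}{3\cdot4^{N-1}}\le\frac{2}{3\cdot 4^{N-2}}.$$
   Context: $\eta^i$ denotes the $i$-th iterate of $\eta$, with $\eta^0$ the identity. *)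

From Stdlib Require Import Reals.
From Coquelicot Require Import Coquelicot.
Open Scope R_scope.

Definition A (x : R) : R := (sin (2 * PI * x)) ^ 2.

Definition mhat : R := (A (1/3) + A (2/3)) / 2.

Definition eta (x : R) : R := x / 4 + 1 / 2.

Definition eta_iter (i : nat) (x : R) : R := Nat.iter i eta x.

Definition F (x : R) : R := A (x / 2) + A (x / 4 + 1 / 2).

Definition term (x : R) (i : nat) : R := F (eta_iter i x) - 2 * mhat.

Fixpoint psum (f : nat -> R) (n : nat) : R :=
  match n with
  | O => 0
  | S m => psum f m + f m
  end.

Definition V2 (x : R) : R := real (Lim_seq (fun n => psum (term x) n)).

Definition epsN (N : nat) (x : R) : R := V2 x - psum (term x) (S N).

(** The iterates of [eta] contract by a factor 4 towards its fixed point [2/3],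
    and [F (2/3) = 2 * mhat]; since [F] is Lipschitz (as [sin^2] is), the
    summands [F (eta^i x) - 2 mhat] are [O(4^-i)].  Hence the series defining
    [V2] converges absolutely and its tail after [N] is dominated by a geometric
    tail. *)

From Stdlib Require Import Reals Lra Lia.
From Coquelicot Require Import Coquelicot.
Open Scope R_scope.

Lemma Rabs_sin_le t : Rabs (sin t) <= Rabs t.
Proof.
  assert (Hpos : forall u, 0 < u -> Rabs (sin u) <= u).
  { intros u Hu. apply Rabs_le. pose proof (sin_lt_x u Hu).
    destruct (Rle_lt_dec 1 u).
    - pose proof (SIN_bound u). lra.
    - pose proof PI2_1. pose proof (sin_lt_0_var (- u)).
      rewrite sin_neg in *. lra. }
  destruct (Rtotal_order t 0) as [Ht | [-> | Ht]].
  - rewrite <- Rabs_Ropp, <- sin_neg, (Rabs_left t) by lra. apply Hpos. lra.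
  - rewrite sin_0, Rabs_R0. lra.
  - rewrite (Rabs_right t) by lra. now apply Hpos.
Qed.

Lemma sin_sqr_sub a b : sin a ^ 2 - sin b ^ 2 = sin (a + b) * sin (a - b).
Proof.
  rewrite sin_plus, sin_minus.
  pose proof (sin2_cos2 a). pose proof (sin2_cos2 b). unfold Rsqr in *. nra.
Qed.

Lemma Rabs_sin_sqr_sub_le a b : Rabs (sin a ^ 2 - sin b ^ 2) <= Rabs (a - b).
Proof.
  rewrite sin_sqr_sub, Rabs_mult.
  assert (Rabs (sin (a + b)) <= 1) by (apply Rabs_le; apply SIN_bound).
  pose proof (Rabs_pos (sin (a - b))). pose proof (Rabs_sin_le (a - b)).
  nra.
Qed.

Lemma A_lipschitz u v : Rabs (A u - A v) <= 2 * PI * Rabs (u - v).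
Proof.
  pose proof PI_RGT_0.
  unfold A. eapply Rle_trans; [apply Rabs_sin_sqr_sub_le |].
  replace (2 * PI * u - 2 * PI * v) with ((2 * PI) * (u - v)) by ring.
  rewrite Rabs_mult, (Rabs_right (2 * PI)) by lra. lra.
Qed.

Lemma F_lipschitz u v : Rabs (F u - F v) <= 3 * PI / 2 * Rabs (u - v).
Proof.
  pose proof (A_lipschitz (u / 2) (v / 2)) as H2.
  pose proof (A_lipschitz (u / 4 + 1 / 2) (v / 4 + 1 / 2)) as H4.
  replace (u / 2 - v / 2) with ((u - v) * / 2) in H2 by field.
  replace (u / 4 + 1 / 2 - (v / 4 + 1 / 2)) with ((u - v) * / 4) in H4 by field.
  rewrite Rabs_mult, (Rabs_right (/ 2)) in H2 by lra.
  rewrite Rabs_mult, (Rabs_right (/ 4)) in H4 by lra.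
  unfold F.
  replace (A (u / 2) + A (u / 4 + 1 / 2) - (A (v / 2) + A (v / 4 + 1 / 2)))
    with ((A (u / 2) - A (v / 2)) + (A (u / 4 + 1 / 2) - A (v / 4 + 1 / 2))) by ring.
  eapply Rle_trans; [apply Rabs_triang | lra].
Qed.

Lemma F_fixpoint_eta : F (2 / 3) = 2 * mhat.
Proof.
  unfold F, mhat.
  replace (2 / 3 / 2) with (1 / 3) by field.
  replace (2 / 3 / 4 + 1 / 2) with (2 / 3) by field.
  field.
Qed.

Lemma eta_iter_sub_fixpoint i x : eta_iter i x - 2 / 3 = (x - 2 / 3) / 4 ^ i.
Proof.
  induction i as [| i IH]; unfold eta_iter in *; simpl.
  - field.
  - unfold eta at 1.
    replace (Nat.iter i eta x / 4 + 1 / 2 - 2 / 3)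
      with ((Nat.iter i eta x - 2 / 3) / 4) by field.
    rewrite IH. field. apply pow_nonzero. lra.
Qed.

Lemma Rabs_term_le x i : 0 <= x <= 1 -> Rabs (term x i) <= PI / 4 ^ i.
Proof.
  intros hx.
  assert (H4i : 0 < 4 ^ i) by (apply pow_lt; lra).
  unfold term. rewrite <- F_fixpoint_eta.
  eapply Rle_trans; [apply F_lipschitz |].
  rewrite eta_iter_sub_fixpoint.
  unfold Rdiv at 2. rewrite Rabs_mult, (Rabs_right (/ 4 ^ i))
    by (apply Rle_ge, Rlt_le, Rinv_0_lt_compat; exact H4i).
  pose proof PI_RGT_0. pose proof (Rinv_0_lt_compat _ H4i).
  apply Rle_trans with (3 * PI / 2 * (2 / 3 * / 4 ^ i)).
  - apply Rmult_le_compat_l; [lra |].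
    apply Rmult_le_compat_r; [lra |]. apply Rabs_le. lra.
  - right. field. lra.
Qed.

Lemma Rabs_term_tail_le x N k :
  0 <= x <= 1 -> Rabs (term x (S N + k)) <= 2 * PI * / 4 ^ (N + k).
Proof.
  intros hx. eapply Rle_trans; [apply Rabs_term_le, hx |].
  rewrite Nat.add_succ_l. simpl pow. unfold Rdiv. rewrite Rinv_mult.
  pose proof PI_RGT_0. pose proof (Rinv_0_lt_compat _ (pow_lt 4 (N + k) ltac:(lra))).
  set (q := / 4 ^ (N + k)) in *.
  assert (0 < PI * q) by (apply Rmult_lt_0_compat; lra).
  lra.
Qed.

Lemma is_series_geom_from q N :
  Rabs q < 1 -> is_series (fun k => q ^ (N + k)) (q ^ N / (1 - q)).
Proof.
  intros Hq.
  eapply is_series_ext; [| exact (is_series_scal_l (q ^ N) _ _ (is_series_geom q Hq))].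
  intros k. rewrite pow_add. reflexivity.
Qed.

Lemma is_series_inv_pow4 N : is_series (fun k => / 4 ^ (N + k)) (4 / 3 / 4 ^ N).
Proof.
  replace (4 / 3 / 4 ^ N) with ((/ 4) ^ N / (1 - / 4))
    by (rewrite pow_inv; field; apply pow_nonzero; lra).
  eapply is_series_ext; [| apply is_series_geom_from; rewrite Rabs_right; lra].
  intros k. apply pow_inv.
Qed.

Lemma psum_S_sum_n (a : nat -> R) n : psum a (S n) = sum_n a n.
Proof.
  rewrite sum_n_Reals.
  induction n as [| n IH]; simpl in *; [ring | now rewrite IH].
Qed.

Lemma is_lim_seq_psum (a : nat -> R) :
  ex_series a -> is_lim_seq (psum a) (Series a).
Proof.
  intros Ha. apply is_lim_seq_incr_1.
  eapply is_lim_seq_ext; [| apply (Series_correct _ Ha)].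
  intros n. symmetry. apply psum_S_sum_n.
Qed.

Lemma Series_psum_tail (a : nat -> R) n :
  ex_series a -> Series a = psum a (S n) + Series (fun k => a (S n + k)%nat).
Proof.
  intros Ha. rewrite (Series_incr_n a (S n)) by (lia || exact Ha).
  now rewrite psum_S_sum_n, sum_n_Reals.
Qed.

Lemma ex_series_Rabs_le (a b : nat -> R) :
  (forall k, Rabs (a k) <= b k) -> ex_series b -> ex_series a.
Proof. exact (@ex_series_le R_AbsRing R_CompleteNormedModule a b). Qed.

Lemma Rabs_Series_le (a b : nat -> R) :
  (forall k, Rabs (a k) <= b k) -> ex_series b -> Rabs (Series a) <= Series b.
Proof.
  intros Hab Hb.
  assert (Habs : ex_series (fun k => Rabs (a k))).
  { apply (ex_series_Rabs_le _ b); [| exact Hb].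
    intros k. rewrite Rabs_Rabsolu. apply Hab. }
  eapply Rle_trans; [apply Series_Rabs, Habs |].
  apply Series_le; [| exact Hb].
  intros k. split; [apply Rabs_pos | apply Hab].
Qed.

Lemma powerRZ_sub_of_nat x n m :
  x <> 0 -> powerRZ x (Z.of_nat n - Z.of_nat m) = x ^ n / x ^ m.
Proof.
  intros Hx. unfold Z.sub.
  now rewrite powerRZ_add, powerRZ_neg', <- !pow_powerRZ by exact Hx.
Qed.

Lemma ex_series_term x : 0 <= x <= 1 -> ex_series (term x).
Proof.
  intros hx. apply (ex_series_Rabs_le _ (fun i => PI * / 4 ^ (0 + i))).
  - exact (fun i => Rabs_term_le x i hx).
  - eexists. exact (is_series_scal_l PI _ _ (is_series_inv_pow4 0)).
Qed.

Lemma V2_eq_Series x : 0 <= x <= 1 -> V2 x = Series (term x).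
Proof.
  intros hx. unfold V2.
  rewrite (is_lim_seq_unique (fun n => psum (term x) n) (Series (term x))); [reflexivity |].
  exact (is_lim_seq_psum _ (ex_series_term x hx)).
Qed.

Lemma Rabs_epsN_le x N :
  0 <= x <= 1 -> Rabs (epsN N x) <= 2 * PI * Series (fun k => / 4 ^ (N + k)).
Proof.
  intros hx. unfold epsN.
  rewrite V2_eq_Series, (Series_psum_tail _ N (ex_series_term x hx)), <- Series_scal_l by exact hx.
  replace (_ + _ - _) with (Series (fun k => term x (S N + k))) by ring.
  apply Rabs_Series_le.
  - intros k. now apply Rabs_term_tail_le.
  - eexists. exact (is_series_scal_l (2 * PI) _ _ (is_series_inv_pow4 N)).
Qed.

Theorem mainTheorem7 (x : R) (N : nat) (hx : 0 <= x <= 1) :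
  ex_finite_lim_seq (fun n => psum (term x) n) /\
  V2 x = psum (term x) (S N) + epsN N x /\
  ex_series (fun k => / 4 ^ (N + k)) /\
  Rabs (epsN N x) <= 2 * PI * Series (fun k => / 4 ^ (N + k)) /\
  2 * PI * Series (fun k => / 4 ^ (N + k)) = 2 * PI / (3 * powerRZ 4 (Z.of_nat N - 1)) /\
  2 * PI / (3 * powerRZ 4 (Z.of_nat N - 1)) <= 2 / (3 * powerRZ 4 (Z.of_nat N - 2)).
Proof.
  assert (H4N : 0 < 4 ^ N) by (apply pow_lt; lra).
  assert (Hsum : Series (fun k => / 4 ^ (N + k)) = 4 / 3 / 4 ^ N)
    by apply is_series_unique, is_series_inv_pow4.
  replace (Z.of_nat N - 1)%Z with (Z.of_nat N - Z.of_nat 1)%Z by reflexivity.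
  replace (Z.of_nat N - 2)%Z with (Z.of_nat N - Z.of_nat 2)%Z by reflexivity.
  rewrite (powerRZ_sub_of_nat 4 N 1), (powerRZ_sub_of_nat 4 N 2) by lra.
  repeat split.
  - exists (Series (term x)). apply is_lim_seq_psum, ex_series_term, hx.
  - unfold epsN. ring.
  - eexists. apply is_series_inv_pow4.
  - apply Rabs_epsN_le, hx.
  - rewrite Hsum. simpl. field. lra.
  - replace (2 * PI / (3 * (4 ^ N / 4 ^ 1))) with (PI * (8 / (3 * 4 ^ N)))
      by (simpl; field; lra).
    replace (2 / (3 * (4 ^ N / 4 ^ 2))) with (4 * (8 / (3 * 4 ^ N)))
      by (simpl; field; lra).
    apply Rmult_le_compat_r; [apply Rlt_le, Rdiv_lt_0_compat | apply PI_4]; lra.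
Qed.
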